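(* For any integer $k$ with $0\le k\le 2$, any code-tuple $F$ that is both $2$-bit delay decodable and extendable, any $i\in[F]$ and $s\in\mathcal{S}$, we have $|\bar{\mathcal{P}}^k_{F,i}(f_i(s))|+|\mathcal{P}^2_{F,\tau_i(s)}|\le 4$.
   Context: $\mathcal{S}$ is a finite source alphabet with $|\mathcal{S}|\ge 2$ and $\mathcal{C}=\{0,1\}$; $\mathcal{A}^k,\mathcal{A}^{\ast},\mathcal{A}^{+}$ are sequences of length $k$, finite length, positive finite length; $\lambda$ empty sequence; $\preceq$ prefix, $\prec$ proper prefix; $\mathrm{suff}(x_1\cdots x_n)=x_2\cdots x_n$. A code-tuple $F$ with $m\ge1$ code tables consists of maps $f_i:\mathcal{S}\to\mathcal{C}^{\ast}$ and $\tau_i:\mathcal{S}\to\{0,\dots,m-1\}$ for $i\in[F]=\{0,\dots,m-1\}$. $f_i^{\ast}(\lambda)=\lambda$, $f_i^{\ast}(\pmb{x})=f_i(x_1)f^{\ast}_{\tau_i(x_1)}(\mathrm{suff}(\pmb{x}))$. For integer $k\ge0$, $\pmb{b}\in\mathcal{C}^{\ast}$: $\mathcal{P}^k_{F,i}(\pmb{b})$ is the set of $\pmb{c}\in\mathcal{C}^k$ such that some $\pmb{x}=x_1\cdots x_n\in\mathcal{S}^{+}$ has $f_i^{\ast}(\pmb{x})\succeq\pmb{b}\pmb{c}$ and $f_i(x_1)\succeq\pmb{b}$; $\bar{\mathcal{P}}^k_{F,i}(\pmb{b})$ the same with $f_i(x_1)\succ\pmb{b}$; $\mathcal{P}^k_{F,i}=\mathcal{P}^k_{F,i}(\lambda)$.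 $F$ is $k$-bit delay decodable if $\mathcal{P}^k_{F,\tau_i(s)}\cap\bar{\mathcal{P}}^k_{F,i}(f_i(s))=\emptyset$ for all $i,s$, and $\mathcal{P}^k_{F,\tau_i(s)}\cap\mathcal{P}^k_{F,\tau_i(s')}=\emptyset$ whenever $s\ne s'$, $f_i(s)=f_i(s')$. $F$ is extendable if $\mathcal{P}^1_{F,i}\ne\emptyset$ for all $i\in[F]$. *)

From mathcomp Require Import all_boot.
From mathcomp Require Import boolp.

Set Implicit Arguments.
Unset Strict Implicit.
Unset Printing Implicit Defensive.

(* Source alphabet: a finType S; code alphabet C = bool ({0,1}).
   A code-tuple with m code tables: f : 'I_m -> S -> seq bool (f_i),
   tau : 'I_m -> S -> 'I_m (tau_i). *)

Section CodeTuple.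
Variables (S : finType) (m : nat).
Variables (f : 'I_m -> S -> seq bool) (tau : 'I_m -> S -> 'I_m).

Fixpoint fstar (i : 'I_m) (x : seq S) : seq bool :=
  match x with
  | [::] => [::]
  | x1 :: xs => f i x1 ++ fstar (tau i x1) xs
  end.

Definition Pset (k : nat) (i : 'I_m) (b : seq bool) : {set k.-tuple bool} :=
  [set c : k.-tuple bool | `[< exists (x1 : S) (xs : seq S),
      prefix (b ++ val c) (fstar i (x1 :: xs)) /\ prefix b (f i x1) >] ].

Definition Pbar (k : nat) (i : 'I_m) (b : seq bool) : {set k.-tuple bool} :=
  [set c : k.-tuple bool | `[< exists (x1 : S) (xs : seq S),
      prefix (b ++ val c) (fstar i (x1 :: xs)) /\
      prefix b (f i x1) /\ b != f i x1 >] ].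

Definition P0 (k : nat) (i : 'I_m) : {set k.-tuple bool} := Pset k i [::].

Definition k_bit_delay_decodable (k : nat) : Prop :=
  (forall (i : 'I_m) (s : S),
      P0 k (tau i s) :&: Pbar k i (f i s) = set0) /\
  (forall (i : 'I_m) (s s' : S), s != s' -> f i s = f i s' ->
      P0 k (tau i s) :&: P0 k (tau i s') = set0).

Definition extendable : Prop := forall i : 'I_m, P0 1 i != set0.

End CodeTuple.

(* Extendability lets every encoded sequence be prolonged by arbitrarily many
   further bits, so each element of bar P^k(b) is the k-bit truncation of an
   element of bar P^2(b) when k <= 2.  Two-bit delay decodability makes
   bar P^2(f_i(s)) and P^2 of the next table disjoint subsets of the
   four-element set C^2. *)

From mathcomp Require Import all_boot.
From mathcomp Require Import boolp.

Set Implicit Arguments.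
Unset Strict Implicit.
Unset Printing Implicit Defensive.

Lemma prefix_cat_extend (T : eqType) (b c w : seq T) n :
    prefix (b ++ c) w -> size c <= n -> size b + n <= size w ->
  exists2 d : seq T, size d = n & prefix (b ++ d) w /\ prefix c d.
Proof.
move=> /prefixP [r ->] cn bnw; exists (take n (c ++ r)).
  by rewrite size_takel // -(leq_add2l (size b)) -size_cat catA.
split; first by rewrite -catA prefix_catr // eqxx prefix_take.
by rewrite take_cat ltnNge cn /= prefix_prefix.
Qed.

Definition truncate (k : nat) {n : nat} (d : n.-tuple bool) : k.-tuple bool :=
  [tuple nth false d j | j < k].

Lemma truncate_prefix k n (c : k.-tuple bool) (d : n.-tuple bool) :
  prefix c d -> truncate k d = c.
Proof.
move=> /prefixP [r dE]; apply: eq_from_tnth => j.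
by rewrite tnth_mktuple dE nth_cat size_tuple ltn_ord -tnth_nth.
Qed.

Section Truncation.
Variables (S : finType) (m : nat).
Variables (f : 'I_m -> S -> seq bool) (tau : 'I_m -> S -> 'I_m).

Definition tau_star (j : 'I_m) (xs : seq S) : 'I_m := foldl tau j xs.

Lemma fstar_cat j xs ys :
  fstar f tau j (xs ++ ys) = fstar f tau j xs ++ fstar f tau (tau_star j xs) ys.
Proof. by elim: xs j => [|x xs IH] j //=; rewrite IH catA. Qed.

Lemma extendable_fstar_size :
  extendable f tau -> forall n j, exists xs, n <= size (fstar f tau j xs).
Proof.
move=> ext; elim=> [|n IH] j; first by exists [::].
have /set0Pn [c] := ext j; rewrite inE => /asboolP [x1 [xs [cx _]]].
have [ys nys] := IH (tau_star j (x1 :: xs)).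
exists ((x1 :: xs) ++ ys); rewrite fstar_cat size_cat -addn1 addnC leq_add //.
by rewrite -(size_tuple c); apply: size_prefix cx.
Qed.

Lemma Pbar_sub_truncate k n i b : k <= n -> extendable f tau ->
  Pbar f tau k i b \subset truncate k @: Pbar f tau n i b.
Proof.
move=> kn ext; apply/subsetP => c; rewrite inE.
move=> /asboolP [x1 [xs [bc_x [b_x1 b_neq]]]].
have [ys nys] := extendable_fstar_size ext n (tau_star i (x1 :: xs)).
have wE := fstar_cat i (x1 :: xs) ys; rewrite cat_cons in wE.
have bc_w : prefix (b ++ c) (fstar f tau i (x1 :: xs ++ ys)).
  by rewrite wE prefix_catl.
have bn_w : size b + n <= size (fstar f tau i (x1 :: xs ++ ys)).
  by rewrite wE size_cat leq_add // size_prefix // (catl_prefix bc_x).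
have cn : size c <= n by rewrite size_tuple.
have [d dn [bd_w cd]] := prefix_cat_extend bc_w cn bn_w.
have /eqP dn' := dn; apply/imsetP; exists (Tuple dn').
  by rewrite inE; apply/asboolP; exists x1, (xs ++ ys).
by apply/esym/truncate_prefix.
Qed.

Lemma card_Pbar_le k n i b : k <= n -> extendable f tau ->
  #|Pbar f tau k i b| <= #|Pbar f tau n i b|.
Proof.
move=> kn ext; apply: leq_trans (leq_imset_card (truncate k) _).
exact: subset_leq_card (Pbar_sub_truncate i b kn ext).
Qed.

End Truncation.

Theorem lemma8 (S : finType) (m : nat)
    (f : 'I_m -> S -> seq bool) (tau : 'I_m -> S -> 'I_m)
    (HS : 2 <= #|S|) (Hm : 1 <= m) (k : nat) (Hk : k <= 2) :
  k_bit_delay_decodable f tau 2 -> extendable f tau ->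
  forall (i : 'I_m) (s : S),
    #|Pbar f tau k i (f i s)| + #|P0 f tau 2 (tau i s)| <= 4.
Proof.
move=> [disj _] ext i s.
rewrite addnC; apply: leq_trans (leq_add (leqnn _) (card_Pbar_le i _ Hk ext)) _.
rewrite -cardsUI disj cards0 addn0.
by apply: leq_trans (max_card _) _; rewrite card_tuple card_bool.
Qed.
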